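(* Assume the setting (S) below. If $V$ is a proper $T$-submodule of $M$, then $e^*_0V=0$.
   Context: Setting (S): $\mathbb{F}$ is a field, $d\ge0$, and $(\{\theta_i\}_{i=0}^d;\{\theta^*_i\}_{i=0}^d;\{\zeta_i\}_{i=0}^d)$ are scalars in $\mathbb{F}$ satisfying: (C1) $\theta_i\ne\theta_j$, $\theta^*_i\ne\theta^*_j$ for $i\ne j$; (C2) $\zeta_0=1$, $\zeta_d\ne0$, $\sum_{i=0}^d\eta_{d-i}(\theta_0)\eta^*_{d-i}(\theta^*_0)\zeta_i\ne0$, where $\eta_i(\lambda)=\prod_{j=0}^{i-1}(\lambda-\theta_{d-j})$, $\eta^*_i(\lambda)=\prod_{j=0}^{i-1}(\lambda-\theta^*_{d-j})$; (C3) $\frac{\theta_{i-2}-\theta_{i+1}}{\theta_{i-1}-\theta_i}$ and $\frac{\theta^*_{i-2}-\theta^*_{i+1}}{\theta^*_{i-1}-\theta^*_i}$ are equal and independent of $i$ for $2\le i\le d-1$. Let $\tau_i(\lambda)=\prod_{j=0}^{i-1}(\lambda-\theta_j)$. For any such data satisfying (C1),(C3), $T$ denotes the associative $\mathbb{F}$-algebra with $1$ generated by $a,e_0,\dots,e_d,a^*,e^*_0,\dots,e^*_d$ with relations $e_ie_j=\delta_{ij}e_i$, $e^*_ie^*_j=\delta_{ij}e^*_i$, $\sum_ie_i=\sum_ie^*_i=1$, $a=\sum_i\theta_ie_i$, $a^*=\sum_i\theta^*_ie^*_i$, $e^*_ia^ke^*_j=0$ and $e_i{a^*}^ke_j=0$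 whenever $0\le i,j,k\le d$, $k<|i-j|$; $e^*_0Te^*_0$ is a commutative $\mathbb{F}$-algebra with identity $e^*_0$, and $\mu:\mathbb{F}[x_1,\dots,x_d]\to e^*_0Te^*_0$ is the surjective algebra homomorphism $x_i\mapsto e^*_0\tau_i(a)e^*_0$. It is assumed (the $\mu$-conjecture) that for every $d'\ge0$ and every data $\{\theta_i\},\{\theta^*_i\}$ of length $d'+1$ satisfying (C1),(C3), the corresponding $\mu$ is an isomorphism. For $1\le i\le d$ put $g_i=e^*_0\tau_i(a)e^*_0-\zeta_ie^*_0/((\theta^*_0-\theta^*_1)\cdots(\theta^*_0-\theta^*_i))$, $J=T(1-e^*_0)+\sum_{i=1}^dTg_i$, and $M=T/J$ as a left $T$-module. *)

From HB Require Import structures.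
From mathcomp Require Import all_boot all_order all_algebra.
From mathcomp Require Import mpoly.
Set Implicit Arguments. Unset Strict Implicit. Unset Printing Implicit Defensive.
Import Order.TTheory GRing.Theory Num.Theory.
Local Open Scope ring_scope.

(* Scalar sequences are functions nat -> F; only the values at 0..d matter. *)

Definition eta_poly (F : fieldType) (d : nat) (th : nat -> F) (i : nat) (l : F) : F :=
  \prod_(j < i) (l - th (d - j)%N).

Definition cond_C1 (F : fieldType) (d : nat) (th ths : nat -> F) : Prop :=
  (forall i j : nat, (i <= d)%N -> (j <= d)%N -> i != j -> th i != th j) /\
  (forall i j : nat, (i <= d)%N -> (j <= d)%N -> i != j -> ths i != ths j).

Definition cond_C2 (F : fieldType) (d : nat) (th ths ze : nat -> F) : Prop :=
  [/\ ze 0%N = 1, ze d != 0 &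
      \sum_(i < d.+1) eta_poly d th (d - i)%N (th 0%N) * eta_poly d ths (d - i)%N (ths 0%N)
        * ze i != 0].

Definition cond_C3 (F : fieldType) (d : nat) (th ths : nat -> F) : Prop :=
  exists beta : F, forall i : nat, (2 <= i)%N -> (i <= d.-1)%N ->
    (th (i - 2)%N - th i.+1) / (th i.-1 - th i) = beta /\
    (ths (i - 2)%N - ths i.+1) / (ths i.-1 - ths i) = beta.

(* The defining relations of T, evaluated at elements
   a, e_0..e_d, as (= a-star), es_0..es_d (= e-star_i) of an F-algebra A. *)
Definition T_relations (F : fieldType) (d : nat) (th ths : nat -> F)
    (A : algType F) (a : A) (e : 'I_d.+1 -> A) (as_ : A) (es : 'I_d.+1 -> A) : Prop :=
  [/\ (forall i j : 'I_d.+1, e i * e j = (if i == j then e i else 0)),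
      (forall i j : 'I_d.+1, es i * es j = (if i == j then es i else 0)),
      \sum_(i < d.+1) e i = 1 & \sum_(i < d.+1) es i = 1] /\
  [/\ a = \sum_(i < d.+1) th i *: e i,
      as_ = \sum_(i < d.+1) ths i *: es i,
      (forall (i j : 'I_d.+1) (k : nat), (k < `|(i : int) - (j : int)|)%N ->
         es i * a ^+ k * es j = 0) &
      (forall (i j : 'I_d.+1) (k : nat), (k < `|(i : int) - (j : int)|)%N ->
         e i * as_ ^+ k * e j = 0)].

(* (A; a, e, as, es) is the algebra T presented by the generators and
   relations above: the relations hold, and it has the universal property
   (unique algebra morphism to any F-algebra with elements satisfying them). *)
Definition is_T (F : fieldType) (d : nat) (th ths : nat -> F)
    (A : algType F) (a : A) (e : 'I_d.+1 -> A) (as_ : A) (es : 'I_d.+1 -> A) : Prop :=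
  T_relations th ths a e as_ es /\
  forall (B : algType F) (b : B) (eb : 'I_d.+1 -> B) (bs : B) (ebs : 'I_d.+1 -> B),
    T_relations th ths b eb bs ebs ->
    (exists f : {lrmorphism A -> B},
        [/\ f a = b, forall i, f (e i) = eb i, f as_ = bs & forall i, f (es i) = ebs i]) /\
    (forall f g : {lrmorphism A -> B},
        f a = g a -> (forall i, f (e i) = g (e i)) -> f as_ = g as_ ->
        (forall i, f (es i) = g (es i)) -> f =1 g).

Definition tau_eval (F : fieldType) (th : nat -> F) (A : algType F) (i : nat) (x : A) : A :=
  \prod_(j < i) (x - (th j)%:A).

Definition mu_gen (F : fieldType) (d : nat) (th : nat -> F)
    (A : algType F) (a : A) (es : 'I_d.+1 -> A) (i : 'I_d) : A :=
  es ord0 * tau_eval th i.+1 a * es ord0.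

(* mu : F[x_1..x_d] -> e^*_0 T e^*_0, x_i |-> e^*_0 tau_i(a) e^*_0, with
   identity e^*_0 (variable x_{i+1} is indexed by i : 'I_d). *)
Definition mu (F : fieldType) (d : nat) (th : nat -> F)
    (A : algType F) (a : A) (es : 'I_d.+1 -> A) (p : {mpoly F[d]}) : A :=
  \sum_(m <- msupp p) p@_m *: (es ord0 * \prod_(i < d) mu_gen th a es i ^+ m i).

Definition mu_is_iso (F : fieldType) (d : nat) (th : nat -> F)
    (A : algType F) (a : A) (es : 'I_d.+1 -> A) : Prop :=
  (forall p q : {mpoly F[d]}, mu th a es p = mu th a es q -> p = q) /\
  (forall t : A, exists p : {mpoly F[d]}, mu th a es p = es ord0 * t * es ord0).

Definition mu_conjecture (F : fieldType) : Prop :=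
  forall (d' : nat) (th ths : nat -> F), cond_C1 d' th ths -> cond_C3 d' th ths ->
  forall (A : algType F) (a : A) (e : 'I_d'.+1 -> A) (as_ : A) (es : 'I_d'.+1 -> A),
    is_T th ths a e as_ es -> mu_is_iso th a es.

Definition g_elt (F : fieldType) (d : nat) (th ths ze : nat -> F)
    (A : algType F) (a : A) (es : 'I_d.+1 -> A) (i : nat) : A :=
  es ord0 * tau_eval th i a * es ord0
  - (ze i / \prod_(j < i) (ths 0%N - ths j.+1)) *: es ord0.

Definition in_J (F : fieldType) (d : nat) (th ths ze : nat -> F)
    (A : algType F) (a : A) (es : 'I_d.+1 -> A) (t : A) : Prop :=
  exists (u : A) (v : 'I_d -> A),
    t = u * (1 - es ord0) + \sum_(i < d) v i * g_elt th ths ze a es i.+1.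

Definition is_left_module (F : fieldType) (A : algType F) (M : zmodType)
    (act : A -> M -> M) : Prop :=
  [/\ forall (t u : A) (m : M), act (t + u) m = act t m + act u m,
      forall (t : A) (m n : M), act t (m + n) = act t m + act t n,
      forall (t u : A) (m : M), act (t * u) m = act t (act u m) &
      forall m : M, act 1 m = m].

(* M is (isomorphic as a left A-module to) A / J: the A-module map
   t |-> t . m0 is surjective with kernel exactly J *)
Definition is_T_mod_J (F : fieldType) (d : nat) (th ths ze : nat -> F)
    (A : algType F) (a : A) (es : 'I_d.+1 -> A)
    (M : zmodType) (act : A -> M -> M) (m0 : M) : Prop :=
  [/\ is_left_module act,
      (forall m : M, exists t : A, act t m0 = m) &
      (forall t : A, act t m0 = 0 <-> in_J th ths ze a es t)].

Definition proper_submodule (F : fieldType) (A : algType F) (M : zmodType)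
    (act : A -> M -> M) (V : M -> Prop) : Prop :=
  [/\ V 0, forall m n, V m -> V n -> V (m + n),
      forall (t : A) m, V m -> V (act t m) & exists m, ~ V m].

From HB Require Import structures.
From mathcomp Require Import all_boot all_order all_algebra.
From mathcomp Require Import mpoly.
Set Implicit Arguments. Unset Strict Implicit. Unset Printing Implicit Defensive.
Local Open Scope ring_scope.
Import GRing.Theory.

(* The generator m0 of M = T/J satisfies (1 - e*_0) m0 = 0 and g_i m0 = 0, so
   every generator e*_0 tau_i(a) e*_0 of e*_0 T e*_0 acts on m0 as a scalar.
   Granting the mu-conjecture these generate e*_0 T e*_0, hence
   e*_0 M = e*_0 T e*_0 m0 = F m0. A submodule V with e*_0 V <> 0 therefore
   contains m0, which generates M, so V = M. *)

Section LeftModule.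
Variables (F : fieldType) (A : algType F) (M : zmodType) (act : A -> M -> M).
Hypothesis hmod : is_left_module act.

Lemma act0l m : act 0 m = 0.
Proof.
case: hmod => actDl _ _ _.
by apply: (addrI (act 0 m)); rewrite -actDl !addr0.
Qed.

Lemma act_scalar_inv (c : F) (m : M) :
  c != 0 -> act c^-1%:A (act c%:A m) = m.
Proof.
case: hmod => _ _ actM act1 c_neq0.
by rewrite -actM -scalerAl mul1r scalerA mulVf // scale1r act1.
Qed.

Lemma submodule_cyclic_full (V : M -> Prop) (m0 : M) :
  (forall (t : A) m, V m -> V (act t m)) ->
  (forall m, exists t, act t m0 = m) -> V m0 -> forall m, V m.
Proof. by move=> Vact gen_m0 Vm0 m; have [t <-] := gen_m0 m; apply: Vact. Qed.

Variable m0 : M.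

Definition acts_by_scalar (x : A) := exists c : F, act x m0 = act c%:A m0.

Lemma acts_by_scalar_alg (k : F) : acts_by_scalar k%:A.
Proof. by exists k. Qed.

Lemma acts_by_scalar1 : acts_by_scalar 1.
Proof. by exists 1; rewrite scale1r. Qed.

Lemma acts_by_scalar0 : acts_by_scalar 0.
Proof. by exists 0; rewrite scale0r. Qed.

Lemma acts_by_scalarD x y :
  acts_by_scalar x -> acts_by_scalar y -> acts_by_scalar (x + y).
Proof.
case: hmod => actDl _ _ _ [c hc] [c' hc']; exists (c + c').
by rewrite actDl hc hc' -actDl scalerDl.
Qed.

Lemma acts_by_scalarM x y :
  acts_by_scalar x -> acts_by_scalar y -> acts_by_scalar (x * y).
Proof.
case: hmod => _ _ actM _ [c hc] [c' hc']; exists (c * c').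
rewrite actM hc' -actM mulr_algr -[c' *: x]mulr_algl actM hc -actM.
by rewrite -scalerAl mul1r scalerA mulrC.
Qed.

Lemma acts_by_scalarZ k x : acts_by_scalar x -> acts_by_scalar (k *: x).
Proof. by rewrite -mulr_algl; apply/acts_by_scalarM/acts_by_scalar_alg. Qed.

Lemma acts_by_scalarX x n : acts_by_scalar x -> acts_by_scalar (x ^+ n).
Proof.
move=> hx; elim: n => [|n IH]; first by rewrite expr0; apply: acts_by_scalar1.
by rewrite exprS; apply: acts_by_scalarM.
Qed.

End LeftModule.

Section QuotientByJ.
Variables (F : fieldType) (d : nat) (th ths ze : nat -> F).
Variables (A : algType F) (a : A) (es : 'I_d.+1 -> A).
Variables (M : zmodType) (act : A -> M -> M) (m0 : M).
Hypothesis hM : is_T_mod_J th ths ze a es act m0.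

Let e0 := es ord0.

Lemma act_in_J t : in_J th ths ze a es t -> act t m0 = 0.
Proof. by case: hM => _ _ hJ /hJ. Qed.

Lemma act_es0_gen : act e0 m0 = m0.
Proof.
have [[actDl _ _ act1] _ _] := hM.
have h : act (1 - e0) m0 = 0.
  apply: act_in_J; exists 1, (fun _ => 0).
  by rewrite mul1r big1 ?addr0 // => i _; rewrite mul0r.
by rewrite -{2}(act1 m0) -(subrK e0 1) actDl h add0r.
Qed.

Lemma es0_acts_by_scalar : acts_by_scalar act m0 e0.
Proof. by have [[_ _ _ act1] _ _] := hM; exists 1; rewrite scale1r act_es0_gen act1. Qed.

Lemma mu_gen_acts_by_scalar (i : 'I_d) : acts_by_scalar act m0 (mu_gen th a es i).
Proof.
have [hmod _ _] := hM.
have g_m0 : act (g_elt th ths ze a es i.+1) m0 = 0.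
  apply: act_in_J; exists 0, (fun j => if j == i then 1 else 0).
  rewrite mul0r add0r (bigD1 i) //= eqxx mul1r big1 ?addr0 //.
  by move=> j /negbTE ->; rewrite mul0r.
rewrite -[mu_gen _ _ _ _](subrK ((ze i.+1 / \prod_(j < i.+1) (ths 0%N - ths j.+1)) *: e0)).
apply: acts_by_scalarD => //; last exact/acts_by_scalarZ/es0_acts_by_scalar.
by exists 0; rewrite g_m0 scale0r act0l.
Qed.

Lemma mu_acts_by_scalar (p : {mpoly F[d]}) : acts_by_scalar act m0 (mu th a es p).
Proof.
have [hmod _ _] := hM.
apply: (big_ind (acts_by_scalar act m0)); first exact: acts_by_scalar0.
  exact: acts_by_scalarD.
move=> m _; apply: acts_by_scalarZ => //.
apply: acts_by_scalarM => //; first exact: es0_acts_by_scalar.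
apply: (big_ind (acts_by_scalar act m0)); first exact: acts_by_scalar1.
  exact: acts_by_scalarM.
by move=> i _; apply: acts_by_scalarX => //; apply: mu_gen_acts_by_scalar.
Qed.

Lemma act_es0_corner t : act (e0 * t) m0 = act (e0 * t * e0) m0.
Proof.
have [[actDl _ _ _] _ _] := hM.
have h : act (e0 * t * (1 - e0)) m0 = 0.
  apply: act_in_J; exists (e0 * t), (fun _ => 0).
  by rewrite big1 ?addr0 // => i _; rewrite mul0r.
by rewrite -{1}(subrK (e0 * t * e0) (e0 * t)) -{1}[e0 * t]mulr1 -mulrBr actDl h add0r.
Qed.

Lemma es0_module_line :
  (forall t : A, exists p : {mpoly F[d]}, mu th a es p = e0 * t * e0) ->
  forall v : M, exists c : F, act e0 v = act c%:A m0.
Proof.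
move=> mu_surj v; have [[_ _ actM _] gen_m0 _] := hM.
have [t <-] := gen_m0 v; have [p mu_p] := mu_surj t.
by rewrite -actM act_es0_corner -mu_p; apply: mu_acts_by_scalar.
Qed.

End QuotientByJ.

Theorem lemma9p1 (F : fieldType) (d : nat) (th ths ze : nat -> F)
    (hC1 : cond_C1 d th ths) (hC2 : cond_C2 d th ths ze) (hC3 : cond_C3 d th ths)
    (hmu : mu_conjecture F)
    (A : algType F) (a : A) (e : 'I_d.+1 -> A) (as_ : A) (es : 'I_d.+1 -> A)
    (hT : is_T th ths a e as_ es)
    (M : zmodType) (act : A -> M -> M) (m0 : M)
    (hM : is_T_mod_J th ths ze a es act m0)
    (V : M -> Prop) (hV : proper_submodule act V) :
  forall v : M, V v -> act (es ord0) v = 0.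
Proof.
move=> v Vv; have [hmod gen_m0 _] := hM.
have [_ _ Vact [m Vm]] := hV.
have [_ mu_surj] := hmu d th ths hC1 hC3 A a e as_ es hT.
have [c e0v] := es0_module_line hM mu_surj v.
have [c0|c_neq0] := eqVneq c 0; first by rewrite e0v c0 scale0r act0l.
have Vm0 : V m0.
  by rewrite -(act_scalar_inv hmod m0 c_neq0) -e0v; apply/Vact/Vact.
by case: Vm; apply: (submodule_cyclic_full Vact gen_m0 Vm0).
Qed.
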